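(* In the setting of the context, for every iteration $k\geq 0$, every batch size $m\in\{1,\dots,|\mathrm{OD}|\}$ and every step size $\gamma_k\in[0,1]$, the iterates of the batched SOFW method satisfy \[ \mathbb{E}\bigl[\Psi(\Theta x_{k+1})\,\big|\,x_k\bigr]\;\leq\;\Psi(\Theta x_k)-\frac{\gamma_k}{|\mathrm{OD}|}\,g(x_k)+\frac{\gamma_k^2}{2|\mathrm{OD}|}\,C^{\otimes}_\Psi, \] where $g(x)=\sum_{w\in\mathrm{OD}}g^{(w)}(x)$ and $g^{(w)}(x)=\max_{s\in\mathcal{X}^{(w)}}\langle\nabla\Psi(\Theta x),\,\Theta(x^{[w]}-s^{[w]})\rangle$ is the block Frank–Wolfe gap. In particular the right-hand side does not depend on $m$.
   Context: Let $\mathcal{G}=(\mathcal{V},\mathcal{E})$ be a finite directed graph. Let $\mathrm{OD}$ be a finite nonempty set of origin–destination pairs $w=(i,j)$ with $i,j\in\mathcal{V}$, each with a demand $d_w>0$. For each $w\in\mathrm{OD}$ let $\mathcal{P}_w$ be a finite nonempty set of directed paths from $i$ to $j$, and let $\mathcal{P}=\bigsqcup_w \mathcal{P}_w$. A path-flow vector $x\in\mathbb{R}^{|\mathcal{P}|}$ is written as a concatenation of blocks $x=(x^{(w)})_{w\in\mathrm{OD}}$ with $x^{(w)}\in\mathbb{R}^{|\mathcal{P}_w|}$. The feasible set is the product $\mathcal{X}=\prod_{w}\mathcal{X}^{(w)}$, where $\mathcal{X}^{(w)}=\{x^{(w)}\geq 0 : \sum_{p\in\mathcal{P}_w}x_p=d_w\}$.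 Let $\Theta\in\{0,1\}^{|\mathcal{E}|\times|\mathcal{P}|}$ be the edge–path incidence matrix ($\Theta_{e,p}=1$ iff edge $e$ lies on path $p$), so edge flows are $F(x)=\Theta x$. Let $\Psi:\mathbb{R}^{|\mathcal{E}|}\to\mathbb{R}$ be convex and continuously differentiable. Lifting notation: for $w\in\mathrm{OD}$ and $x\in\mathbb{R}^{|\mathcal{P}|}$, $x^{[w]}\in\mathbb{R}^{|\mathcal{P}|}$ denotes the vector that agrees with $x$ on the coordinates indexed by $\mathcal{P}_w$ and is zero elsewhere; similarly, for $s^{(w)}\in\mathcal{X}^{(w)}$, $s^{[w]}$ is its zero-padded lift to $\mathbb{R}^{|\mathcal{P}|}$. Block curvature constants: for $w\in\mathrm{OD}$, \[ C^{(w)}_\Psi := \sup\frac{2}{\gamma^2}\Bigl[\Psi(\Theta y)-\Psi(\Theta x)-\langle\nabla\Psi(\Theta x),\,\Theta(y-x)\rangle\Bigr], \] the supremum over $x\in\mathcal{X}$, $s^{(w)}\in\mathcal{X}^{(w)}$, $\gamma\in(0,1]$, with $y=x+\gamma(s^{[w]}-x^{[w]})$; these are assumed finite, and $C^{\otimes}_\Psi:=\sum_{w\in\mathrm{OD}}C^{(w)}_\Psi$. Batched SOFW method: given $x_k\in\mathcal{X}$, draw $\mathcal{I}_k\subset\mathrm{OD}$ uniformly at random among all subsets of size $m$, independently of the past. For each $w\in\mathcal{I}_k$ choose $s_k^{(w)}\in\arg\min_{s\in\mathcal{X}^{(w)}}\langle\nabla\Psi(\Theta x_k),\Theta s^{[w]}\rangle$.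 Set $d_k=\frac1m\sum_{w\in\mathcal{I}_k}(s_k^{[w]}-x_k^{[w]})$ and $x_{k+1}=x_k+\gamma_k d_k$. *)

From HB Require Import structures.
From mathcomp Require Import all_boot all_order all_algebra.
From mathcomp Require Import all_classical all_reals all_analysis.
Unset Printing Implicit Defensive.
Import Order.TTheory GRing.Theory Num.Theory numFieldNormedType.Exports.
Local Open Scope classical_set_scope.
Local Open Scope ring_scope.

Fixpoint is_dpath {V : finType} {ne : nat} (tl hd : 'I_ne -> V)
    (i j : V) (s : seq 'I_ne) : bool :=
  match s with
  | [::] => i == j
  | e :: s' => (tl e == i) && is_dpath tl hd (hd e) j s'
  end.

(* Edge--path incidence applied to a path flow: F(x) = Theta x. *)
Definition Theta {R : realType} {ne : nat} {P : finType} (pe : P -> seq 'I_ne)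
    (x : P -> R) : 'rV[R]_ne :=
  \row_(e < ne) \sum_(p : P) (e \in pe p)%:R * x p.

Definition ip {R : realType} {ne : nat} (a b : 'rV[R]_ne) : R :=
  \sum_(e < ne) a 0 e * b 0 e.

Definition grad {R : realType} {ne : nat} (Psi : 'rV[R]_ne -> R)
    (y : 'rV[R]_ne) : 'rV[R]_ne :=
  \row_(e < ne) ('D_(delta_mx 0 e) Psi y).

Definition lift {R : realType} {W P : finType} (pod : P -> W) (w : W)
    (x : P -> R) : P -> R :=
  fun p => if pod p == w then x p else 0.

(* Block feasibility: the block-w coordinates of s form an element of X^{(w)}
   (coordinates outside block w are irrelevant; only lift w s is used). *)
Definition inXw {R : realType} {W P : finType} (pod : P -> W) (d : W -> R)
    (w : W) (s : P -> R) : Prop :=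
  (forall p, pod p = w -> 0 <= s p) /\ \sum_(p | pod p == w) s p = d w.

Definition inX {R : realType} {W P : finType} (pod : P -> W) (d : W -> R)
    (x : P -> R) : Prop :=
  forall w, inXw pod d w x.

Definition curv_set {R : realType} {ne : nat} {W P : finType} (pod : P -> W)
    (pe : P -> seq 'I_ne) (d : W -> R) (Psi : 'rV[R]_ne -> R) (w : W) : set R :=
  [set r | exists x s (g : R),
      [/\ inX pod d x, inXw pod d w s, 0 < g, g <= 1 &
       let y := fun p => x p + g * (lift pod w s p - lift pod w x p) in
       r = 2 / g ^+ 2 * (Psi (Theta pe y) - Psi (Theta pe x)
             - ip (grad Psi (Theta pe x)) (Theta pe (fun p => y p - x p)))]].

Definition curv {R : realType} {ne : nat} {W P : finType} (pod : P -> W)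
    (pe : P -> seq 'I_ne) (d : W -> R) (Psi : 'rV[R]_ne -> R) (w : W) : R :=
  sup (curv_set pod pe d Psi w).

(* Block Frank--Wolfe gap g^{(w)}(x) (a max over the compact X^{(w)}, written
   as a supremum). *)
Definition fwgap_blk {R : realType} {ne : nat} {W P : finType} (pod : P -> W)
    (pe : P -> seq 'I_ne) (d : W -> R) (Psi : 'rV[R]_ne -> R) (x : P -> R)
    (w : W) : R :=
  sup [set r | exists s, inXw pod d w s /\
        r = ip (grad Psi (Theta pe x))
               (Theta pe (fun p => lift pod w x p - lift pod w s p))].

Definition fwgap {R : realType} {ne : nat} {W P : finType} (pod : P -> W)
    (pe : P -> seq 'I_ne) (d : W -> R) (Psi : 'rV[R]_ne -> R) (x : P -> R) : R :=
  \sum_(w : W) fwgap_blk pod pe d Psi x w.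

Definition is_lmo {R : realType} {ne : nat} {W P : finType} (pod : P -> W)
    (pe : P -> seq 'I_ne) (d : W -> R) (Psi : 'rV[R]_ne -> R) (x : P -> R)
    (w : W) (s : P -> R) : Prop :=
  inXw pod d w s /\
  forall s', inXw pod d w s' ->
    ip (grad Psi (Theta pe x)) (Theta pe (lift pod w s))
    <= ip (grad Psi (Theta pe x)) (Theta pe (lift pod w s')).

Definition sofw_dir {R : realType} {W P : finType} (pod : P -> W) (m : nat)
    (I : {set W}) (s : W -> P -> R) (x : P -> R) : P -> R :=
  fun p => m%:R^-1 * \sum_(w in I) (lift pod w (s w) p - lift pod w x p).

From Pilot Require Import Defs.
From HB Require Import structures.
From mathcomp Require Import all_boot all_order all_algebra.
From mathcomp Require Import all_classical all_reals all_analysis.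
From mathcomp Require Import ring lra.
Import Order.TTheory GRing.Theory Num.Theory numFieldNormedType.Exports.
Local Open Scope ring_scope.

(* The batched direction is the average of the m single-block Frank-Wolfe
   directions, so by convexity the batched step does no worse than the average
   of the single-block steps.  Each single-block step decreases Psi by
   gamma g^(w) up to the curvature term gamma^2 C^(w) / 2.  Averaging over the
   uniformly drawn batch, every block lies in the same fraction m / |OD| of
   the batches, so the expected batch average is the plain average over all
   blocks, whatever m is. *)

Section Jensen.
Variables (R : numFieldType) (V : lmodType R) (f : V -> R).
Hypothesis f_convex : forall (a b : V) (t : R), 0 <= t -> t <= 1 ->
  f (t *: a + (1 - t) *: b) <= t * f a + (1 - t) * f b.

Lemma convex_sum_le (I : eqType) (r : seq I) (a : I -> R) (z : I -> V) :
  (forall i, i \in r -> 0 <= a i) -> \sum_(i <- r) a i = 1 ->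
  f (\sum_(i <- r) a i *: z i) <= \sum_(i <- r) a i * f (z i).
Proof.
elim: r a => [|i r IH] a a_ge0; first by rewrite big_nil => /esym/eqP; rewrite oner_eq0.
rewrite !big_cons => sum1.
have ar_ge0 j : j \in r -> 0 <= a j by move=> rj; apply: a_ge0; rewrite inE rj orbT.
set S := \sum_(j <- r) a j in sum1.
have S_ge0 : 0 <= S by rewrite /S big_seq sumr_ge0.
have S_le1 : S <= 1 by rewrite -sum1 lerDr a_ge0 ?mem_head.
have -> : a i = 1 - S by rewrite -sum1 addrK.
have [S0|S_neq0] := eqVneq S 0.
  have ar0 j : j \in r -> a j = 0.
    move=> rj; move/eqP: S0; rewrite /S big_seq psumr_eq0; last exact: ar_ge0.
    by move=> /allP /(_ j rj); rewrite rj => /eqP.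
  rewrite S0 subr0 scale1r mul1r big_seq big1 ?addr0; last by move=> j /ar0 ->; rewrite scale0r.
  by rewrite big_seq big1 ?addr0 // => j /ar0 ->; rewrite mul0r.
have S_gt0 : 0 < S by rewrite lt_def S_neq0.
have a_scale j : a j = S * (a j / S) by rewrite mulrCA mulfV ?mulr1.
have -> : \sum_(j <- r) a j *: z j = S *: \sum_(j <- r) (a j / S) *: z j.
  by rewrite scaler_sumr; apply: eq_bigr => j _; rewrite scalerA -a_scale.
have -> : \sum_(j <- r) a j * f (z j) = S * \sum_(j <- r) (a j / S) * f (z j).
  by rewrite mulr_sumr; apply: eq_bigr => j _; rewrite mulrA -a_scale.
have IHS : f (\sum_(j <- r) (a j / S) *: z j) <= \sum_(j <- r) (a j / S) * f (z j).
  apply: IH => [j rj|]; first by rewrite divr_ge0 ?ar_ge0 // ltW.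
  by rewrite -mulr_suml mulfV.
have t_ge0 : 0 <= 1 - S by rewrite subr_ge0.
have t_le1 : 1 - S <= 1 by rewrite lerBlDr lerDl.
have := f_convex (z i) (\sum_(j <- r) (a j / S) *: z j) (1 - S) t_ge0 t_le1.
by rewrite subKr => /le_trans; apply; rewrite lerD2l ler_wpM2l.
Qed.

End Jensen.

Lemma sum_draws_mem (T : finType) (k : nat) (x : T) :
  (\sum_(A : {set T} | #|A| == k.+1) (x \in A : nat))%N = 'C(#|T|.-1, k).
Proof.
have all_draws : (\sum_(A : {set T} | #|A| == k.+1) 1)%N = 'C(#|T|, k.+1).
  by rewrite sum1dep_card card_draws.
have draws_notin :
    (\sum_(A : {set T} | #|A| == k.+1) (x \notin A : nat))%N = 'C(#|T|.-1, k.+1).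
  rewrite -(cardsC1 x) -cards_draws -sum1dep_card big_mkcond [RHS]big_mkcond.
  apply: eq_bigr => A _; have -> : (A \subset [set~ x]) = (x \notin A).
    by rewrite finset.subsets_disjoint finset.setCK fintype.disjoint_sym finset.disjoints1.
  by case: (#|A| == k.+1); case: (x \in A).
have split_draws : (\sum_(A : {set T} | #|A| == k.+1) 1)%N =
    (\sum_(A : {set T} | #|A| == k.+1) (x \in A : nat)
     + \sum_(A : {set T} | #|A| == k.+1) (x \notin A : nat))%N.
  by rewrite -big_split; apply: eq_bigr => A _; case: (x \in A).
move: split_draws; rewrite all_draws draws_notin.
have : (0 < #|T|)%N by apply/card_gt0P; exists x.
by case: #|T| => // n _ /=; rewrite binS addnC => /addIn.
Qed.

Lemma mean_batch_mean (R : numFieldType) (T : finType) (h : T -> R) (m : nat) :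
  (0 < m)%N -> (m <= #|T|)%N ->
  (\sum_(A : {set T} | #|A| == m) m%:R^-1 * \sum_(x in A) h x)
    / #|[set A : {set T} | #|A| == m]|%:R
  = #|T|%:R^-1 * \sum_x h x.
Proof.
case: m => // k _ k_le; rewrite card_draws.
have -> : \sum_(A : {set T} | #|A| == k.+1) k.+1%:R^-1 * \sum_(x in A) h x
    = k.+1%:R^-1 * ('C(#|T|.-1, k)%:R * \sum_x h x) :> R.
  rewrite -mulr_sumr; congr (_ * _).
  under eq_bigr do rewrite big_mkcond /=.
  rewrite exchange_big mulr_sumr; apply: eq_bigr => x _.
  rewrite -(sum_draws_mem _ k x) natr_sum mulr_suml; apply: eq_bigr => A _.
  by case: (x \in A); rewrite ?mul1r ?mul0r.
have binom : (#|T| * 'C(#|T|.-1, k) = k.+1 * 'C(#|T|, k.+1))%N by rewrite mul_bin_diag.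
have T_neq0 : #|T|%:R != 0 :> R by rewrite pnatr_eq0 -lt0n (leq_trans _ k_le).
have C_neq0 : 'C(#|T|, k.+1)%:R != 0 :> R by rewrite pnatr_eq0 -lt0n bin_gt0.
have -> : 'C(#|T|.-1, k)%:R = k.+1%:R * 'C(#|T|, k.+1)%:R / #|T|%:R :> R.
  by rewrite -natrM -binom natrM mulrC mulKf.
by field; rewrite T_neq0 C_neq0 addrC natr1 pnatr_eq0.
Qed.

Section Linearity.
Variables (R : realType) (ne : nat) (P : finType) (pe : P -> seq 'I_ne).

Lemma Theta_sum (I : Type) (r : seq I) (a : I -> R) (f : I -> P -> R) :
  Theta pe (fun p => \sum_(i <- r) a i * f i p)
  = \sum_(i <- r) a i *: Theta pe (f i).
Proof.
apply/rowP => e; rewrite mxE summxE.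
under eq_bigr do rewrite mulr_sumr.
rewrite exchange_big; apply: eq_bigr => i _.
by rewrite !mxE mulr_sumr; apply: eq_bigr => p _; rewrite mulrCA.
Qed.

Lemma ThetaB (f g : P -> R) :
  Theta pe (fun p => f p - g p) = Theta pe f - Theta pe g.
Proof. by apply/rowP => e; rewrite !mxE -sumrB; apply: eq_bigr => p _; rewrite mulrBr. Qed.

Lemma ThetaZ c (f : P -> R) : Theta pe (fun p => c * f p) = c *: Theta pe f.
Proof. by apply/rowP => e; rewrite !mxE mulr_sumr; apply: eq_bigr => p _; rewrite mulrCA. Qed.

Lemma ipB (a u v : 'rV[R]_ne) : ip a (u - v) = ip a u - ip a v.
Proof. by rewrite /ip -sumrB; apply: eq_bigr => e _; rewrite !mxE mulrBr. Qed.

Lemma ipZ (a u : 'rV[R]_ne) c : ip a (c *: u) = c * ip a u.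
Proof. by rewrite /ip mulr_sumr; apply: eq_bigr => e _; rewrite !mxE mulrCA. Qed.

End Linearity.

Section BlockStep.
Variables (R : realType) (ne : nat) (W P : finType) (pod : P -> W).
Variables (pe : P -> seq 'I_ne) (d : W -> R) (Psi : 'rV[R]_ne -> R).
Variables (x : P -> R) (w : W) (s : P -> R) (gamma : R).

Let G := grad Psi (Theta pe x).
Let dir := fun p => Defs.lift pod w s p - Defs.lift pod w x p.

Lemma fwgap_blk_lmo : is_lmo pod pe d Psi x w s ->
  fwgap_blk pod pe d Psi x w <= - ip G (Theta pe dir).
Proof.
move=> [s_feas s_min]; apply: ge_sup => [|_ [s' [s'_feas ->]]].
  by exists (ip G (Theta pe (fun p => Defs.lift pod w x p - Defs.lift pod w s p))), s.
by rewrite /dir !ThetaB !ipB; have := s_min s' s'_feas; rewrite -/G; lra.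
Qed.

Lemma curv_step_le : inX pod d x -> inXw pod d w s -> 0 <= gamma -> gamma <= 1 ->
  has_ubound (curv_set pod pe d Psi w) ->
  Psi (Theta pe (fun p => x p + gamma * dir p))
  <= Psi (Theta pe x) + gamma * ip G (Theta pe dir)
     + gamma ^+ 2 / 2 * curv pod pe d Psi w.
Proof.
move=> x_feas s_feas g_ge0 g_le1 curv_ub.
have [->|g_neq0] := eqVneq gamma 0.
  by rewrite expr0n /= !mul0r !addr0; under eq_fun do rewrite mul0r addr0.
have g_gt0 : 0 < gamma by rewrite lt_def g_neq0.
set y := fun p => x p + gamma * dir p.
have y_sub_x : Theta pe (fun p => y p - x p) = gamma *: Theta pe dir.
  by rewrite -ThetaZ; congr (Theta pe _); apply/funext => p; rewrite /y addrC addKr.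
set r := 2 / gamma ^+ 2 * (Psi (Theta pe y) - Psi (Theta pe x)
           - ip G (Theta pe (fun p => y p - x p))).
have r_in : curv_set pod pe d Psi w r by exists x, s, gamma.
have r_le : r <= curv pod pe d Psi w.
  by apply: sup_upper_bound => //; split; first exists r.
have -> : Psi (Theta pe y)
    = Psi (Theta pe x) + gamma * ip G (Theta pe dir) + gamma ^+ 2 / 2 * r.
  by rewrite /r y_sub_x ipZ; field.
by rewrite lerD2l ler_wpM2l // divr_ge0 // exprn_ge0.
Qed.

Lemma block_step_le : inX pod d x -> is_lmo pod pe d Psi x w s ->
  0 <= gamma -> gamma <= 1 -> has_ubound (curv_set pod pe d Psi w) ->
  Psi (Theta pe (fun p => x p + gamma * dir p))
  <= Psi (Theta pe x) - gamma * fwgap_blk pod pe d Psi x w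
     + gamma ^+ 2 / 2 * curv pod pe d Psi w.
Proof.
move=> x_feas s_lmo g_ge0 g_le1 curv_ub.
apply: le_trans (curv_step_le x_feas s_lmo.1 g_ge0 g_le1 curv_ub) _.
rewrite lerD2r lerD2l -mulrN ler_wpM2l // lerNr.
exact: fwgap_blk_lmo.
Qed.

End BlockStep.

Lemma sofw_step_avg (R : realType) (W P : finType) (pod : P -> W) (m : nat)
    (I : {set W}) (s : W -> P -> R) (x : P -> R) (gamma : R) :
  #|I| = m -> (0 < m)%N ->
  (fun p => x p + gamma * sofw_dir pod m I s x p)
  = (fun p => \sum_(w <- enum I) m%:R^-1 *
       (x p + gamma * (Defs.lift pod w (s w) p - Defs.lift pod w x p))).
Proof.
move=> card_I m_gt0; apply/funext => p; rewrite big_enum /= -mulr_sumr big_split /=.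
rewrite sumr_const card_I -mulr_sumr /sofw_dir -mulr_natr.
by field; rewrite pnatr_eq0 -lt0n.
Qed.

Lemma sofw_step_le (R : realType) (ne : nat) (W P : finType) (pod : P -> W)
    (pe : P -> seq 'I_ne) (Psi : 'rV[R]_ne -> R) (m : nat) (I : {set W})
    (s : W -> P -> R) (x : P -> R) (gamma : R) (h : W -> R) :
  (forall (a b : 'rV[R]_ne) (t : R), 0 <= t -> t <= 1 ->
     Psi (t *: a + (1 - t) *: b) <= t * Psi a + (1 - t) * Psi b) ->
  #|I| = m -> (0 < m)%N ->
  (forall w, w \in I ->
     Psi (Theta pe (fun p => x p + gamma *
            (Defs.lift pod w (s w) p - Defs.lift pod w x p))) <= h w) ->
  Psi (Theta pe (fun p => x p + gamma * sofw_dir pod m I s x p))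
  <= m%:R^-1 * \sum_(w in I) h w.
Proof.
move=> Psi_convex card_I m_gt0 block_le.
rewrite sofw_step_avg // Theta_sum.
apply: le_trans (@convex_sum_le _ _ _ Psi_convex _ _ _ _ _ _) _.
- by move=> w _; rewrite invr_ge0 ler0n.
- by rewrite big_enum sumr_const /= card_I -[_ *+ m]mulr_natr mulVf // pnatr_eq0 -lt0n.
rewrite big_enum -mulr_sumr ler_wpM2l ?invr_ge0 ?ler0n //.
by apply: ler_sum => w; apply: block_le.
Qed.

Theorem mainTheorem2
  (R : realType)
  (* directed graph: vertices V, edges 'I_ne with tail tl and head hd *)
  (V : finType) (ne : nat) (tl hd : 'I_ne -> V)
  (* OD pairs w = (orig w, dest w), demands d *)
  (W : finType) (orig dest : W -> V) (d : W -> R)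
  (* paths: each path p belongs to block pod p and has edge list pe p *)
  (P : finType) (pod : P -> W) (pe : P -> seq 'I_ne)
  (Psi : 'rV[R]_ne -> R)
  (* the OD set is nonempty, a set of vertex pairs, with positive demands *)
  (hW0 : (0 < #|W|)%N)
  (hOD : injective (fun w => (orig w, dest w)))
  (hd0 : forall w, 0 < d w)
  (* E is a set of vertex pairs *)
  (hE : injective (fun e => (tl e, hd e)))
  (* P_w is a finite nonempty set of directed paths from orig w to dest w *)
  (hPne : forall w, exists p, pod p = w)
  (hPpath : forall p, is_dpath tl hd (orig (pod p)) (dest (pod p)) (pe p))
  (hPinj : injective pe)
  (* Psi convex and continuously differentiable *)
  (hconv : forall (a b : 'rV[R]_ne) (t : R), 0 <= t -> t <= 1 ->
     Psi (t *: a + (1 - t) *: b) <= t * Psi a + (1 - t) * Psi b)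
  (hdiff : forall y, differentiable Psi y)
  (hC1 : continuous (grad Psi))
  (* block curvature constants are finite *)
  (hCfin : forall w, has_ubound (curv_set pod pe d Psi w))
  (* current iterate x_k, batch size m, step size gamma_k *)
  (x : P -> R) (hx : inX pod d x)
  (m : nat) (hm1 : (1 <= m)%N) (hm2 : (m <= #|W|)%N)
  (gamma : R) (hg0 : 0 <= gamma) (hg1 : gamma <= 1)
  (* oracle choices s I w (allowed to depend on the drawn batch I) *)
  (s : {set W} -> W -> P -> R)
  (hs : forall (I : {set W}) w, w \in I -> is_lmo pod pe d Psi x w (s I w)) :
  (* E[Psi(Theta x_{k+1}) | x_k]: I_k uniform among subsets of size m *)
  (\sum_(I : {set W} | #|I| == m)
      Psi (Theta pe (fun p => x p + gamma * sofw_dir pod m I (s I) x p)))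
    / #|[set I : {set W} | #|I| == m]|%:R
  <= Psi (Theta pe x) - gamma / #|W|%:R * fwgap pod pe d Psi x
     + gamma ^+ 2 / (2 * #|W|%:R) * \sum_(w : W) curv pod pe d Psi w.
Proof.
pose h w := Psi (Theta pe x) - gamma * fwgap_blk pod pe d Psi x w
            + gamma ^+ 2 / 2 * curv pod pe d Psi w.
have batch_le (I : {set W}) : #|I| == m ->
    Psi (Theta pe (fun p => x p + gamma * sofw_dir pod m I (s I) x p))
    <= m%:R^-1 * \sum_(w in I) h w.
  move=> /eqP card_I; apply: sofw_step_le => // w wI.
  exact: block_step_le (hs I w wI) _ _ _.
apply: (le_trans (y := (\sum_(I : {set W} | #|I| == m) m%:R^-1 * \sum_(w in I) h w)
                        / #|[set I : {set W} | #|I| == m]|%:R)).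
  by rewrite ler_wpM2r ?invr_ge0 ?ler0n // ler_sum.
rewrite mean_batch_mean // /h /fwgap !big_split /= sumrN -!mulr_sumr sumr_const.
have W_neq0 : #|W|%:R != 0 :> R by rewrite pnatr_eq0 -lt0n.
by rewrite -mulr_natl le_eqVlt; apply/orP; left; apply/eqP; field.
Qed.
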